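(* Let $G$ be a finite group, with $H_1,\dots,H_n$ a full set of representatives of conjugacy classes of subgroups. Then $$\mathrm{lcm}_{1\le i\le n}\ \mathcal{K}_{G/\{e\}}\big(G/H_i\big)\quad\text{divides}\quad \mathrm{lcm}_{(H_i,V)}\ \mathcal{K}_{(G/\{e\},\mathbf 1)}\big((G/H_i,V)\big),$$ where the left side is computed in the Burnside ring $\Omega(G)$ and the right side in the global representation ring $R(G,e)$, the lcm on the right running over all $i$ and all irreducible representations $V$ of $H_i$ (up to $N_G(H_i)$-conjugation). That is, the Knutson Index of the Burnside ring with respect to the generating set of rows of the table of marks divides the Knutson Index of the global representation ring with respect to the generating set of rows of the global table.
   Context: For a commutative ring $R$ with ring homomorphism $\alpha:R\to\mathbb{Z}$ and regular element $r$ (i.e. $\alpha(r)\ne0$ and $xr=\alpha(x)r$ for all $x$), the Knutson Index $\mathcal{K}_r(x)$ is the non-negative integer $m$ with $Rx\cap\mathbb{Z}r=m\mathbb{Z}r$. $\Omega(G)$ is the Burnside ring (Grothendieck ring of finite $G$-sets under disjoint union and Cartesian product), $\alpha(X)=|X|$, regular element $G/\{e\}$. $R(G,e)$ is the global representation ring: the Grothendieck ring of $G$-equivariant complex vector bundles on finite $G$-sets, with addition by disjoint union and product given by Cartesian product of bases with tensor product of fibres; it has $\mathbb{Z}$-basis the classes $(G/H_i,V)$ (the bundle on $G/H_i$ whose fibre at the identity coset is the irreducible $H_i$-representation $V$, taken up to $N_G(H_i)$-conjugation). Elements are detected by marks $(G/H,V)(K,k)=\sum_{gH\in(G/H)^K}\chi_V(g^{-1}kg)$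 for $K\le G$, $k\in K$, which are ring homomorphisms to $\mathbb{C}$. The dimension homomorphism on $R(G,e)$ is $x\mapsto x(\{e\},e)$, so $\alpha((G/H,V))=|G/H|\dim V$, and the regular element is $(G/\{e\},\mathbf 1)$, where $\mathbf 1$ is the (regular = trivial) representation of the trivial group. *)

From Stdlib Require Import ClassicalEpsilon.
From mathcomp Require Import all_boot all_order all_algebra all_fingroup all_solvable all_field all_character.
Set Implicit Arguments. Unset Strict Implicit. Unset Printing Implicit Defensive.
Import GRing.Theory Num.Theory.

Local Open Scope group_scope.

(* Knutson index: the unique m : nat with  R x ∩ Z r = m Z r.
   [I] is the set of integers c such that c * r ∈ R x. *)
Definition is_knutson (I : int -> Prop) (m : nat) : Prop :=
  forall c : int, I c <-> (m%:Z %| c)%Z.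

Definition knutson (I : int -> Prop) : nat :=
  epsilon (inhabits 0%N) (fun m => is_knutson I m).

Section Marks.
Variable gT : finGroupType.

Definition fixed_cosets (G H K : {set gT}) : {set {set gT}} :=
  [set C in lcosets H G | [forall k in K, k *: C == C]].

Definition markB (G H K : {set gT}) : nat := #|fixed_cosets G H K|.

Definition markR (G : {set gT}) (H : {group gT}) (phi : 'CF(H))
  (K : {set gT}) (k : gT) : algC :=
  (\sum_(C in fixed_cosets G H K) phi (k ^ repr C)%g)%R.

(* Ideal {c : Z | c * (G/{e}) ∈ Omega(G) * (G/H)}, computed via the
   (injective, multiplicative) marks homomorphism of the Burnside ring. *)
Definition IB (G H : {group gT}) (c : int) : Prop :=
  exists a : {group gT} -> int,
    forall K : {group gT}, K \subset G ->
      ((\sum_(L : {group gT} | L \subset G) a L * (markB G L K)%:Z)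
         * (markB G H K)%:Z = c * (markB G 1%G K)%:Z)%R.

(* Ideal {c : Z | c * (G/{e},1) ∈ R(G,e) * (G/H, chi_i)}, computed via the
   marks (K,k), which detect elements and are ring homomorphisms. *)
Definition IR (G H : {group gT}) (i : Iirr H) (c : int) : Prop :=
  exists a : forall L : {group gT}, Iirr L -> int,
    forall K : {group gT}, K \subset G -> forall k, k \in K ->
      ((\sum_(L : {group gT} | L \subset G) \sum_(j : Iirr L)
           (a L j)%:~R * markR G 'chi[L]_j K k)
         * markR G 'chi[H]_i K k
       = c%:~R * markR G (1 : 'CF([1 gT]%G)) K k)%R.

End Marks.
Arguments IR {gT} G H i c.

From mathcomp Require Import all_boot all_order all_algebra all_fingroup all_solvable all_field all_character.
From mathcomp Require Import boolp.
From Stdlib Require Import ClassicalEpsilon.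
Set Implicit Arguments. Unset Strict Implicit. Unset Printing Implicit Defensive.
Import GRing.Theory Num.Theory.

(* Evaluating marks at the identity is the dimension homomorphism
   R(G,e) -> Omega(G), (G/L, V) |-> dim V . G/L, which sends (G/H, 1) to G/H
   and (G/{e}, 1) to G/{e}.  Hence the ideal of integers c with
   c (G/{e},1) in R(G,e) (G/H,1) lies in the ideal of c with
   c G/{e} in Omega(G) G/H, so the Knutson index of G/H divides that of
   (G/H, 1). *)

Local Open Scope ring_scope.

Definition int_ideal (I : int -> Prop) : Prop :=
  [/\ I 0, forall x y, I x -> I y -> I (x + y) & forall d x, I x -> I (d * x)].

Section IntIdeal.
Variable I : int -> Prop.
Hypothesis idealI : int_ideal I.

Lemma int_ideal_abs c : I c -> I `|c|%N.
Proof. by case: idealI => _ _ IM Ic; rewrite abszE normrEsg; apply: IM. Qed.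

Lemma int_ideal_mod c d : I c -> I d -> I (c %% d)%Z.
Proof.
case: idealI => _ ID IM Ic Id.
have -> : (c %% d)%Z = c + - (c %/ d)%Z * d.
  by rewrite mulNr; apply/eqP; rewrite eq_sym subr_eq addrC -divz_eq.
by apply: ID => //; apply: IM.
Qed.

Lemma int_ideal_knutson : exists m, is_knutson I m.
Proof.
case: idealI => I0 _ IM.
have [[n [n_gt0 In]] | noI] := pselect (exists n, (0 < n)%N /\ I n).
- have exP : exists n, `[< (0 < n)%N /\ I n >] by exists n; apply/asboolP.
  case: (ex_minnP exP) => m /asboolP[m_gt0 Im] min_m.
  exists m => c; split => [Ic | /dvdzP[d ->]]; last exact: IM.
  apply/dvdz_mod0P/eqP/negPn/negP => r_neq0.
  have m_neq0 : m%:Z != 0 by rewrite eqz_nat -lt0n.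
  have r_ge0 := modz_ge0 c m_neq0.
  have /(min_m `|(c %% m)%Z|%N) : `[< (0 < `|(c %% m)%Z|)%N /\ I `|(c %% m)%Z|%N >].
    by apply/asboolP; rewrite absz_gt0; split; last exact/int_ideal_abs/int_ideal_mod.
  by rewrite leqNgt -ltz_nat gez0_abs // ltz_pmod // ltz_nat.
- exists 0%N => c; rewrite dvd0z; split => [Ic | /eqP->] //.
  apply/negPn/negP => c_neq0; apply: noI; exists `|c|%N.
  by rewrite absz_gt0; split; last exact: int_ideal_abs.
Qed.

Lemma knutsonP : is_knutson I (knutson I).
Proof. exact: epsilon_spec int_ideal_knutson. Qed.

End IntIdeal.

Lemma is_knutson_dvd I J m n :
  is_knutson I m -> is_knutson J n -> (forall c, I c -> J c) -> (n %| m)%N.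
Proof.
by move=> kI kJ sIJ; have /kJ := sIJ m (proj2 (kI m) (dvdzz m)); rewrite dvdzE.
Qed.

Section GlobalMarks.
Variable gT : finGroupType.
Implicit Types (G H K L : {group gT}).

Lemma IB_int_ideal G H : int_ideal (IB G H).
Proof.
split.
- by exists (fun _ => 0) => K _; rewrite big1 ?mul0r // => L _; rewrite mul0r.
- move=> x y [a1 h1] [a2 h2]; exists (fun L => a1 L + a2 L) => K sKG.
  under eq_bigr do rewrite mulrDl.
  by rewrite big_split /= mulrDl h1 // h2 // mulrDl.
- move=> d x [a h]; exists (fun L => d * a L) => K sKG.
  under eq_bigr do rewrite -mulrA.
  by rewrite -mulr_sumr -mulrA h // mulrA.
Qed.

Lemma IR_int_ideal G H i : int_ideal (IR G H i).
Proof.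
split.
- exists (fun _ _ => 0) => K _ k _; rewrite big1 ?mul0r // => L _.
  by rewrite big1 // => j _; rewrite mul0r.
- move=> x y [a1 h1] [a2 h2]; exists (fun L j => a1 L j + a2 L j) => K sKG k kK.
  under eq_bigr do (under eq_bigr do rewrite intrD mulrDl; rewrite big_split).
  by rewrite big_split /= mulrDl h1 // h2 // intrD mulrDl.
- move=> d x [a h]; exists (fun L j => d * a L j) => K sKG k kK.
  under eq_bigr do (under eq_bigr do rewrite intrM -mulrA; rewrite -mulr_sumr).
  by rewrite -mulr_sumr -mulrA h // intrM mulrA.
Qed.

Lemma markR1 (G : {set gT}) L (phi : 'CF(L)) (K : {set gT}) :
  markR G phi K 1%g = (markB G L K)%:R * phi 1%g.
Proof.
rewrite /markR /markB; under eq_bigr do rewrite conj1g.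
by rewrite sumr_const mulr_natl.
Qed.

Lemma IR_trivial_sub_IB G H c : IR G H 0 c -> IB G H c.
Proof.
case=> a h; exists (fun L => \sum_(j : Iirr L) a L j * (irr_degree (socle_of_Iirr j))%:R).
move=> K sKG; apply: (@intr_inj algC).
have := h K sKG 1%g (group1 K); rewrite !markR1 irr0 !cfun11 !mulr1 => e.
rewrite !rmorphM /=; apply: (etrans _ e); congr (_ * _).
rewrite rmorph_sum; apply: eq_bigr => L _.
rewrite rmorphM rmorph_sum mulr_suml; apply: eq_bigr => j _.
by rewrite markR1 irr1_degree rmorphM /= rmorph_nat -mulrA [_%:R * _]mulrC.
Qed.

Lemma knutson_IB_dvd_IR G H : (knutson (IB G H) %| knutson (IR G H 0%R))%N.
Proof.
exact: is_knutson_dvd (knutsonP (IR_int_ideal G (0 : Iirr H)))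
  (knutsonP (IB_int_ideal G H)) (@IR_trivial_sub_IB G H).
Qed.

End GlobalMarks.

Local Close Scope ring_scope.

Theorem lemma4p4 (gT : finGroupType) (G : {group gT}) :
  (\big[lcmn/1%N]_(H : {group gT} | H \subset G) knutson (IB G H))
  %| (\big[lcmn/1%N]_(H : {group gT} | H \subset G)
        \big[lcmn/1%N]_(i : Iirr H) knutson (IR G H i)).
Proof.
apply/dvdn_biglcmP => H sHG; apply: (biglcmn_sup H sHG).
exact: (biglcmn_sup 0%R _ (knutson_IB_dvd_IR G H)).
Qed.
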